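(* Let $M=uI+N\in F(\mathcal{R})$, where $u$ is a positive unit of $\mathcal{R}$ and $N$ is the $2\times2$ matrix with rows $\lambda_1v$ and $\lambda_2v$, $v=(1-x,1-y)$, $\lambda_1,\lambda_2\in\mathcal{R}$, $\lambda_1(1-x)+\lambda_2(1-y)=1-u$. Then (i) $M^n=u^nI+(1+u+u^2+\dots+u^{n-1})N$ for every integer $n>1$; (ii) if $M$ lies in the commutator subgroup of $F(\mathcal{R})$ then $\lambda_1,\lambda_2\in\Sigma$; more generally, if $M$ lies in the $j$-th term $F(\mathcal{R})_j$ of the lower central series of $F(\mathcal{R})$ ($j\ge1$), then $\lambda_1,\lambda_2\in\Sigma^{j-1}$.
   Context: $\mathcal{R}=\mathbb{Z}[x,x^{-1},y,y^{-1}]$; positive units are the monomials $x^iy^j$; $\Sigma$ is the augmentation ideal of $\mathcal{R}$ (kernel of $x,y\mapsto1$ to $\mathbb{Z}$), with $\Sigma^0=\mathcal{R}$. $F(\mathcal{R})$ is the subgroup of $GL_2(\mathcal{R})$ generated by $M_1=\begin{pmatrix}1&1-y\\0&x\end{pmatrix}$ and $M_2=\begin{pmatrix}y&0\\1-x&1\end{pmatrix}$. Every element of $F(\mathcal{R})$ has the form $uI+N$ described in the claim (and $u,\lambda_1,\lambda_2$ are determined by the element). The lower central series is $G_1=G$, $G_j=[G,G_{j-1}]$. *)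

From HB Require Import structures.
From mathcomp Require Import all_boot all_order all_algebra fraction.
Set Implicit Arguments. Unset Strict Implicit. Unset Printing Implicit Defensive.
Import Order.TTheory GRing.Theory Num.Theory.
Local Open Scope ring_scope.

(* The Laurent ring R = Z[x,x^-1,y,y^-1] is realised as the
   subring of K = Frac(Z[x,y]) (Z[x,y] = {poly {poly int}}, inner variable x,
   outer variable y) consisting of the elements p / (x^a y^b). *)
Definition K : Type := {fraction {poly {poly int}}}.
Notation tofrac := (@FracField.tofrac {poly {poly int}}).
Notation "x %:F" := (tofrac x) : ring_scope.

Definition X : K := ((('X : {poly int})%:P : {poly {poly int}}))%:F.
Definition Y : K := (('X : {poly {poly int}}))%:F.

Definition laurent (f : K) : Prop :=
  exists (p : {poly {poly int}}) (a b : nat), f = p%:F / (X ^+ a * Y ^+ b).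

Definition aug (f : K) : Prop :=
  exists (p : {poly {poly int}}) (a b : nat),
    f = p%:F / (X ^+ a * Y ^+ b) /\ (p.[1%:P]).[1] = 0.

Inductive sigma_pow : nat -> K -> Prop :=
| sp0 f : laurent f -> sigma_pow 0 f
| spM k a b : aug a -> sigma_pow k b -> sigma_pow k.+1 (a * b)
| spD k f g : sigma_pow k.+1 f -> sigma_pow k.+1 g -> sigma_pow k.+1 (f + g).

Definition mx2 (a b c d : K) : 'M[K]_2 :=
  \matrix_(i < 2, j < 2)
    (if (i : nat) == 0%N then (if (j : nat) == 0%N then a else b)
     else (if (j : nat) == 0%N then c else d)).

Definition M1 : 'M[K]_2 := mx2 1 (1 - Y) 0 X.
Definition M2 : 'M[K]_2 := mx2 Y 0 (1 - X) 1.

Inductive inF : 'M[K]_2 -> Prop :=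
| inF1 : inF M1
| inF2 : inF M2
| inFM A B : inF A -> inF B -> inF (A *m B)
| inFV A : inF A -> inF (invmx A).

Definition commg2 (A B : 'M[K]_2) : 'M[K]_2 :=
  invmx A *m invmx B *m A *m B.

Inductive lcs : nat -> 'M[K]_2 -> Prop :=
| lcs1 A : inF A -> lcs 1 A
| lcsC j A B : inF A -> lcs j.+1 B -> lcs j.+2 (commg2 A B)
| lcsM j A B : lcs j.+2 A -> lcs j.+2 B -> lcs j.+2 (A *m B)
| lcsV j A : lcs j.+2 A -> lcs j.+2 (invmx A).

Definition Nmat (l1 l2 : K) : 'M[K]_2 :=
  mx2 (l1 * (1 - X)) (l1 * (1 - Y)) (l2 * (1 - X)) (l2 * (1 - Y)).

From HB Require Import structures.
From mathcomp Require Import all_boot all_order all_algebra fraction.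
From mathcomp Require Import ring.
Import Order.TTheory GRing.Theory Num.Theory.
Set Implicit Arguments. Unset Strict Implicit.
Local Open Scope ring_scope.

(* Write A = u I + N(l) with N(l) = l v^T, v = (1 - x, 1 - y) and v^T l = 1 - u.
   Then N(l) N(m) = (1 - u') N(l) when v^T m = 1 - u', so these matrices multiply
   like the affine maps w |-> u w + l: (u, l) (u', m) = (u u', l + u m).  Powers
   give the geometric sums of (i).  A commutator [A, B] has u = 1 and
   l = uA^-1 uB^-1 ((1 - uB) lA - (1 - uA) lB); since 1 - u lies in Sigma for
   every monomial u, and u = 1 on F_2, each step down the lower central series
   puts l one power of Sigma deeper.  Finally l is determined by A, since the
   off-diagonal entries of A are l1 (1 - y) and l2 (1 - x). *)

Section AffineMatrices.
Variable F : fieldType.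

Definition mat2 (a b c d : F) : 'M[F]_2 :=
  \matrix_(i < 2, j < 2)
    (if (i : nat) == 0%N then (if (j : nat) == 0%N then a else b)
     else (if (j : nat) == 0%N then c else d)).

Lemma mat2_mul a b c d a' b' c' d' :
  mat2 a b c d *m mat2 a' b' c' d' =
  mat2 (a * a' + b * c') (a * b' + b * d') (c * a' + d * c') (c * b' + d * d').
Proof.
apply/matrixP => i j; rewrite !mxE !big_ord_recr big_ord0 /= !mxE /= add0r.
by case: i => [[|[|i]] Hi] //; case: j => [[|[|j]] Hj].
Qed.

Lemma mat2_add a b c d a' b' c' d' :
  mat2 a b c d + mat2 a' b' c' d' = mat2 (a + a') (b + b') (c + c') (d + d').
Proof.
apply/matrixP => i j; rewrite !mxE.
by case: i => [[|[|i]] Hi] //; case: j => [[|[|j]] Hj].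
Qed.

Lemma mat2_scale k a b c d : k *: mat2 a b c d = mat2 (k * a) (k * b) (k * c) (k * d).
Proof.
apply/matrixP => i j; rewrite !mxE.
by case: i => [[|[|i]] Hi] //; case: j => [[|[|j]] Hj].
Qed.

Lemma mat2_scalar k : k%:M = mat2 k 0 0 k.
Proof.
apply/matrixP => i j; rewrite !mxE.
by case: i => [[|[|i]] Hi] //; case: j => [[|[|j]] Hj].
Qed.

Definition mat2E := (mat2_scalar, mat2_scale, mat2_add, mat2_mul).

Variables x y : F.

(* At F = K these are [mx2] and, for x, y = X, Y, [Nmat], up to conversion. *)
Definition rank1_part l1 l2 :=
  mat2 (l1 * (1 - x)) (l1 * (1 - y)) (l2 * (1 - x)) (l2 * (1 - y)).

Definition affine_form (A : 'M[F]_2) u l1 l2 :=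
  A = u%:M + rank1_part l1 l2 /\ l1 * (1 - x) + l2 * (1 - y) = 1 - u.

Lemma affine_form_M1 : affine_form (mat2 1 (1 - y) 0 x) x 1 0.
Proof. by split; [rewrite /rank1_part !mat2E; congr mat2 | ]; ring. Qed.

Lemma affine_form_M2 : affine_form (mat2 y 0 (1 - x) 1) y 0 1.
Proof. by split; [rewrite /rank1_part !mat2E; congr mat2 | ]; ring. Qed.

Lemma affine_formM A B u l1 l2 u' m1 m2 :
  affine_form A u l1 l2 -> affine_form B u' m1 m2 ->
  affine_form (A *m B) (u * u') (l1 + u * m1) (l2 + u * m2).
Proof.
move=> [-> hA] [-> hB].
have -> : u = 1 - (l1 * (1 - x) + l2 * (1 - y)) by rewrite hA; ring.
have -> : u' = 1 - (m1 * (1 - x) + m2 * (1 - y)) by rewrite hB; ring.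
by split; [rewrite /rank1_part !mat2E; congr mat2 | ]; ring.
Qed.

Lemma affine_formV A u l1 l2 : u != 0 -> affine_form A u l1 l2 ->
  affine_form (invmx A) u^-1 (- (u^-1 * l1)) (- (u^-1 * l2)).
Proof.
move=> u_neq0 [-> hA].
pose B := u^-1%:M + rank1_part (- (u^-1 * l1)) (- (u^-1 * l2)).
have Eu : u = 1 - (l1 * (1 - x) + l2 * (1 - y)) by rewrite hA; ring.
have AB1 : (u%:M + rank1_part l1 l2) *m B = 1%:M.
  rewrite /B Eu /rank1_part !mat2E; congr mat2; field; by rewrite -Eu.
have [A_unit _] := mulmx1_unit AB1.
split; last by rewrite Eu; field; rewrite -Eu.
by rewrite -[RHS](mulKmx A_unit) AB1 mulmx1.
Qed.

Lemma affine_form_commg A B uA uB l1 l2 m1 m2 : uA != 0 -> uB != 0 ->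
  affine_form A uA l1 l2 -> affine_form B uB m1 m2 ->
  affine_form (invmx A *m invmx B *m A *m B) 1
    (uA^-1 * uB^-1 * ((1 - uB) * l1 - (1 - uA) * m1))
    (uA^-1 * uB^-1 * ((1 - uB) * l2 - (1 - uA) * m2)).
Proof.
move=> nA nB fA fB.
have := affine_formM (affine_formM (affine_formM
  (affine_formV nA fA) (affine_formV nB fB)) fA) fB.
have -> : uA^-1 * uB^-1 * uA * uB = 1 by field; rewrite nA nB.
suff cE l m : - (uA^-1 * l) + uA^-1 * - (uB^-1 * m) + uA^-1 * uB^-1 * l
              + uA^-1 * uB^-1 * uA * m
              = uA^-1 * uB^-1 * ((1 - uB) * l - (1 - uA) * m) by rewrite !cE.
by field; rewrite nA nB.
Qed.

Lemma affine_form_expr A u l1 l2 : affine_form A u l1 l2 -> forall n : nat,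
  A ^+ n = (u ^+ n)%:M + (\sum_(k < n) u ^+ k) *: rank1_part l1 l2.
Proof.
move=> [-> hA]; elim=> [|n IH]; first by rewrite expr0 big_ord0 scale0r addr0.
rewrite exprS IH big_ord_recr /= -mulmxE exprS.
move: (\sum_(i < n) u ^+ i) (u ^+ n) => s w.
have -> : u = 1 - (l1 * (1 - x) + l2 * (1 - y)) by rewrite hA; ring.
by rewrite /rank1_part !mat2E; congr mat2; ring.
Qed.

Lemma affine_form_coef_unique A u l1 l2 u' m1 m2 : x != 1 -> y != 1 ->
  affine_form A u l1 l2 -> affine_form A u' m1 m2 -> l1 = m1 /\ l2 = m2.
Proof.
move=> x_neq1 y_neq1 [-> _] [E _].
have := congr1 (fun M : 'M[F]_2 => M ord0 (lift ord0 ord0)) E.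
have := congr1 (fun M : 'M[F]_2 => M (lift ord0 ord0) ord0) E.
rewrite /rank1_part !mat2E !mxE /= !add0r => e2 e1.
split; [apply: (mulIf _ e1) | apply: (mulIf _ e2)]; by rewrite subr_eq0 eq_sym.
Qed.

End AffineMatrices.

Section MonomialFractions.
Variables (F : fieldType) (x y : F).
Hypotheses (x_neq0 : x != 0) (y_neq0 : y != 0).

Lemma monomial_term_neq0 (a b : nat) : x ^+ a * y ^+ b != 0.
Proof. by rewrite mulf_neq0 ?expf_neq0. Qed.

Lemma frac_monomialD (P Q : F) (a b c d : nat) :
  P / (x ^+ a * y ^+ b) + Q / (x ^+ c * y ^+ d)
  = (P * x ^+ c * y ^+ d + Q * x ^+ a * y ^+ b) / (x ^+ (a + c) * y ^+ (b + d)).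
Proof. by rewrite !exprD; field; rewrite ?mulf_neq0 ?expf_neq0. Qed.

Lemma frac_monomialM (P Q : F) (a b c d : nat) :
  P / (x ^+ a * y ^+ b) * (Q / (x ^+ c * y ^+ d))
  = (P * Q) / (x ^+ (a + c) * y ^+ (b + d)).
Proof. by rewrite !exprD; field; rewrite ?mulf_neq0 ?expf_neq0. Qed.

Lemma monomial_termM (a b c d : nat) :
  x ^+ a * y ^+ b * (x ^+ c * y ^+ d) = x ^+ (a + c) * y ^+ (b + d).
Proof. by rewrite !exprD; ring. Qed.

Lemma subr_frac_monomial (a b c d : nat) :
  1 - x ^+ a * y ^+ b / (x ^+ c * y ^+ d)
  = (x ^+ c * y ^+ d - x ^+ a * y ^+ b) / (x ^+ c * y ^+ d).
Proof. by field; rewrite ?mulf_neq0 ?expf_neq0. Qed.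

Lemma frac_monomialV (a b c d : nat) :
  (x ^+ a * y ^+ b / (x ^+ c * y ^+ d))^-1 = x ^+ c * y ^+ d / (x ^+ a * y ^+ b).
Proof. by field; rewrite ?mulf_neq0 ?expf_neq0. Qed.

Lemma frac_monomial_neq0 (a b c d : nat) : x ^+ a * y ^+ b / (x ^+ c * y ^+ d) != 0.
Proof. by rewrite mulf_neq0 ?invr_eq0 ?monomial_term_neq0. Qed.

End MonomialFractions.

Definition xp : {poly {poly int}} := 'X%:P.
Definition yp : {poly {poly int}} := 'X.
Definition ev11 (p : {poly {poly int}}) : int := (p.[1%:P]).[1].

Lemma ev11D p q : ev11 (p + q) = ev11 p + ev11 q.
Proof. by rewrite /ev11 !hornerD. Qed.

Lemma ev11M p q : ev11 (p * q) = ev11 p * ev11 q.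
Proof. by rewrite /ev11 !hornerM. Qed.

Lemma ev11N p : ev11 (- p) = - ev11 p.
Proof. by rewrite /ev11 !hornerN. Qed.

Lemma ev11_monomial (a b : nat) : ev11 (xp ^+ a * yp ^+ b) = 1.
Proof.
by rewrite /ev11 /xp /yp !(hornerM, horner_exp) hornerC hornerX -rmorphXn
  !(hornerC, horner_exp, hornerX) !expr1n mulr1.
Qed.

Lemma XE : X = xp%:F. Proof. by []. Qed.
Lemma YE : Y = yp%:F. Proof. by []. Qed.

Lemma X_neq0 : X != 0.
Proof. by rewrite /X tofrac_eq0 polyC_eq0 polyX_eq0. Qed.

Lemma Y_neq0 : Y != 0.
Proof. by rewrite /Y tofrac_eq0 polyX_eq0. Qed.

Lemma X_neq1 : X != 1.
Proof.
rewrite /X -tofrac1 tofrac_eq -polyC1 (inj_eq polyC_inj).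
apply/eqP => /(congr1 (size : {poly int} -> nat)).
by rewrite size_polyX size_polyC oner_eq0.
Qed.

Lemma Y_neq1 : Y != 1.
Proof.
rewrite /Y -tofrac1 tofrac_eq.
apply/eqP => /(congr1 (size : {poly {poly int}} -> nat)).
by rewrite size_polyX size_polyC oner_eq0.
Qed.

Ltac push_tofrac :=
  rewrite ?(tofracD, tofracM, tofracXn, tofracN, tofracB, tofrac1, tofrac0) ?XE ?YE.

Lemma laurent_tofrac p : laurent p%:F.
Proof. by exists p, 0%N, 0%N; rewrite !expr0 mulr1 divr1. Qed.

Lemma laurent0 : laurent 0. Proof. by rewrite -tofrac0; apply: laurent_tofrac. Qed.
Lemma laurent1 : laurent 1. Proof. by rewrite -tofrac1; apply: laurent_tofrac. Qed.
Lemma laurentN1 : laurent (-1).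
Proof. by rewrite -tofrac1 -tofracN; apply: laurent_tofrac. Qed.

Lemma laurentD f g : laurent f -> laurent g -> laurent (f + g).
Proof.
move=> [p [a [b ->]]] [q [c [d ->]]].
exists (p * xp ^+ c * yp ^+ d + q * xp ^+ a * yp ^+ b), (a + c)%N, (b + d)%N.
by push_tofrac; exact: (frac_monomialD X_neq0 Y_neq0).
Qed.

Lemma laurentM f g : laurent f -> laurent g -> laurent (f * g).
Proof.
move=> [p [a [b ->]]] [q [c [d ->]]]; exists (p * q), (a + c)%N, (b + d)%N.
by push_tofrac; exact: (frac_monomialM X_neq0 Y_neq0).
Qed.

Lemma laurentN f : laurent f -> laurent (- f).
Proof. by rewrite -mulN1r; apply: laurentM laurentN1. Qed.

Lemma aug_laurent f : aug f -> laurent f.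
Proof. by move=> [p [a [b [-> _]]]]; exists p, a, b. Qed.

Lemma aug0 : aug 0.
Proof. by exists 0, 0%N, 0%N; rewrite tofrac0 mul0r !horner0. Qed.

Lemma augMl c f : laurent c -> aug f -> aug (c * f).
Proof.
move=> [q [a [b ->]]] [p [c' [d [-> p0]]]].
exists (q * p), (a + c')%N, (b + d)%N; split; last first.
  by rewrite -/(ev11 _) ev11M [ev11 p]p0 mulr0.
by push_tofrac; exact: (frac_monomialM X_neq0 Y_neq0).
Qed.

Definition monomial (u : K) :=
  exists a b c d : nat, u = X ^+ a * Y ^+ b / (X ^+ c * Y ^+ d).

Lemma monomial1 : monomial 1.
Proof. by exists 0%N, 0%N, 0%N, 0%N; rewrite !expr0 mulr1 divr1. Qed.

Lemma monomialX : monomial X.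
Proof. by exists 1%N, 0%N, 0%N, 0%N; rewrite !expr0 !mulr1 divr1. Qed.

Lemma monomialY : monomial Y.
Proof. by exists 0%N, 1%N, 0%N, 0%N; rewrite !expr0 mul1r mulr1 divr1. Qed.

(* The field lemmas are instantiated at X, Y explicitly: unifying their
   variables with the concrete X, Y by matching is prohibitively slow. *)
Lemma monomialM u v : monomial u -> monomial v -> monomial (u * v).
Proof.
move=> [a [b [c [d ->]]]] [a' [b' [c' [d' ->]]]].
exists (a + a')%N, (b + b')%N, (c + c')%N, (d + d')%N.
by rewrite (frac_monomialM X_neq0 Y_neq0) monomial_termM.
Qed.

Lemma monomialV u : monomial u -> monomial u^-1.
Proof.
move=> [a [b [c [d ->]]]]; exists c, d, a, b.
by rewrite (frac_monomialV X_neq0 Y_neq0).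
Qed.

Lemma monomial_neq0 u : monomial u -> u != 0.
Proof. by move=> [a [b [c [d ->]]]]; exact: (frac_monomial_neq0 X_neq0 Y_neq0). Qed.

Lemma monomial_laurent u : monomial u -> laurent u.
Proof. by move=> [a [b [c [d ->]]]]; exists (xp ^+ a * yp ^+ b), c, d; push_tofrac. Qed.

Lemma monomial_aug u : monomial u -> aug (1 - u).
Proof.
move=> [a [b [c [d ->]]]].
exists (xp ^+ c * yp ^+ d - xp ^+ a * yp ^+ b), c, d; split; last first.
  by rewrite -/(ev11 _) ev11D ev11N !ev11_monomial subrr.
by push_tofrac; rewrite (subr_frac_monomial X_neq0 Y_neq0).
Qed.

Lemma sigma_pow_laurent k f : sigma_pow k f -> laurent f.
Proof.
elim=> {k f} [f // | k a b /aug_laurent ha _ hb | k f g _ hf _ hg].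
- exact: laurentM.
- exact: laurentD.
Qed.

Lemma sigma_powMl k c f : laurent c -> sigma_pow k f -> sigma_pow k (c * f).
Proof.
move=> hc hf; elim: hf c hc => {k f} [f hf | k a b ha hb _ | k f g _ hf _ hg] c hc.
- exact/sp0/laurentM.
- by rewrite mulrA; apply: spM (augMl hc ha) hb.
- by rewrite mulrDr; apply: spD; [apply: hf | apply: hg].
Qed.

Lemma sigma_powD k f g : sigma_pow k f -> sigma_pow k g -> sigma_pow k (f + g).
Proof.
case: k => [|k] hf hg; last exact: spD.
exact/sp0/laurentD/(sigma_pow_laurent hg)/(sigma_pow_laurent hf).
Qed.

Lemma sigma_pow_zero k : sigma_pow k 0.
Proof.
elim: k => [|k IH]; first exact/sp0/laurent0.
by rewrite -(mul0r 0); apply: spM aug0 IH.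
Qed.

Local Notation affine_formK := (affine_form X Y).

Lemma inF_affine_form A : inF A -> exists u l1 l2,
  [/\ monomial u, affine_formK A u l1 l2, laurent l1 & laurent l2].
Proof.
elim=> {A} [| | A B _ [u [l1 [l2 [hu fA h1 h2]]]] _ [u' [m1 [m2 [hu' fB h1' h2']]]]
              | A _ [u [l1 [l2 [hu fA h1 h2]]]]].
- exists X, 1, 0; split; [exact: monomialX | exact: affine_form_M1 | | ].
  + exact: laurent1.
  + exact: laurent0.
- exists Y, 0, 1; split; [exact: monomialY | exact: affine_form_M2 | | ].
  + exact: laurent0.
  + exact: laurent1.
- exists (u * u'), (l1 + u * m1), (l2 + u * m2); split.
  + exact: monomialM.
  + exact: affine_formM.
  + exact: laurentD h1 (laurentM (monomial_laurent hu) h1').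
  + exact: laurentD h2 (laurentM (monomial_laurent hu) h2').
- exists u^-1, (- (u^-1 * l1)), (- (u^-1 * l2)); split.
  + exact: monomialV.
  + exact: affine_formV (monomial_neq0 hu) fA.
  + exact: laurentN (laurentM (monomial_laurent (monomialV hu)) h1).
  + exact: laurentN (laurentM (monomial_laurent (monomialV hu)) h2).
Qed.

Lemma sigma_pow_commg_coef j uA uB l m :
  monomial uA -> monomial uB -> ((0 < j)%N -> uB = 1) ->
  laurent l -> sigma_pow j m ->
  sigma_pow j.+1 (uA^-1 * uB^-1 * ((1 - uB) * l - (1 - uA) * m)).
Proof.
move=> hA hB uB1 hl hm.
apply: sigma_powMl.
  exact: monomial_laurent (monomialM (monomialV hA) (monomialV hB)).
apply: sigma_powD; last first.
  by rewrite -mulNr -mulN1r; apply: spM hm; apply: augMl laurentN1 (monomial_aug hA).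
case: j uB1 hm => [|j] uB1 _; first exact: spM (monomial_aug hB) (sp0 hl).
by rewrite uB1 // subrr mul0r; apply: sigma_pow_zero.
Qed.

Lemma lcs_affine_form j A : lcs j A -> exists u l1 l2,
  [/\ monomial u, affine_formK A u l1 l2, sigma_pow j.-1 l1, sigma_pow j.-1 l2
    & (1 < j)%N -> u = 1].
Proof.
elim=> {j A}.
- move=> A /inF_affine_form [u [l1 [l2 [hu fA h1 h2]]]].
  by exists u, l1, l2; split; try exact: sp0.
- move=> j A B /inF_affine_form [uA [l1 [l2 [hA fA h1 h2]]]] _
    [uB [m1 [m2 [hB fB h1' h2' uB1]]]].
  have fC := affine_form_commg (monomial_neq0 hA) (monomial_neq0 hB) fA fB.
  by eexists 1, _, _; split; [exact: monomial1 | exact: fC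
    | exact: sigma_pow_commg_coef hA hB uB1 h1 h1'
    | exact: sigma_pow_commg_coef hA hB uB1 h2 h2' | ].
- move=> j A B _ [u [l1 [l2 [_ fA h1 h2 u1]]]] _ [u' [m1 [m2 [_ fB h1' h2' u'1]]]].
  have := affine_formM fA fB; rewrite u1 // u'1 // !mul1r => fAB.
  by exists 1, (l1 + m1), (l2 + m2); split;
    [exact: monomial1 | | exact: sigma_powD h1 h1' | exact: sigma_powD h2 h2' | ].
- move=> j A _ [u [l1 [l2 [hu fA h1 h2 u1]]]].
  have := affine_formV (monomial_neq0 hu) fA; rewrite u1 // invr1 !mul1r => fV.
  exists 1, (- l1), (- l2); split=> //; first exact: monomial1;
    by rewrite -mulN1r; apply: sigma_powMl laurentN1 _.
Qed.

Theorem lemma2 (M : 'M[K]_2) (a b : int) (l1 l2 : K) :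
  inF M -> laurent l1 -> laurent l2 ->
  l1 * (1 - X) + l2 * (1 - Y) = 1 - X ^ a * Y ^ b ->
  M = (X ^ a * Y ^ b)%:M + Nmat l1 l2 ->
  (forall n : nat, (1 < n)%N ->
     M ^+ n = ((X ^ a * Y ^ b) ^+ n)%:M
              + (\sum_(k < n) (X ^ a * Y ^ b) ^+ k) *: Nmat l1 l2)
  /\ (forall j : nat, (1 <= j)%N -> lcs j M ->
        sigma_pow j.-1 l1 /\ sigma_pow j.-1 l2).
Proof.
move=> _ _ _ hrel hM.
have fM : affine_formK M (X ^ a * Y ^ b) l1 l2 by split.
split=> [n _ | j _ /lcs_affine_form [u [m1 [m2 [_ fM' h1 h2 _]]]]].
  exact: affine_form_expr fM n.
by have [-> ->] := affine_form_coef_unique X_neq1 Y_neq1 fM fM'.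
Qed.
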